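(* Let $0<\alpha<1$, $T>0$, $M\ge 2$ an integer, $\tau=T/M$, $t_j=j\tau$ ($j=0,1,\dots,M$), and let $u\in\mathcal{C}^3[0,T]$. Then for every $j=1,2,\dots,M-1$, $$\left|\partial_{0t_{j+1}}^{\alpha}u-\Delta_{0t_{j+1}}^{\alpha}u\right|=\mathcal{O}(\tau^{3-\alpha}),$$ i.e. $\left|\partial_{0t_{j+1}}^{\alpha}u-\Delta_{0t_{j+1}}^{\alpha}u\right|\le C\tau^{3-\alpha}$ with a constant $C$ depending only on $\alpha$ and $\max_{[0,T]}|u'''|$ (not on $\tau$ or $j$).
   Context: The Caputo derivative of order $\alpha\in(0,1)$ is $\partial_{0t}^{\alpha}u=\frac{1}{\Gamma(1-\alpha)}\int_0^t u'(\eta)(t-\eta)^{-\alpha}\,d\eta$. Set $u_{t,s}=(u(t_{s+1})-u(t_s))/\tau$, $a_l^{(\alpha)}=(l+1)^{1-\alpha}-l^{1-\alpha}$ and $b_l^{(\alpha)}=\frac{1}{2-\alpha}\left[(l+1)^{2-\alpha}-l^{2-\alpha}\right]-\frac12\left[(l+1)^{1-\alpha}+l^{1-\alpha}\right]$ for $l\ge0$. The L2 formula is $$\Delta_{0t_{j+1}}^{\alpha}u=\frac{\tau^{1-\alpha}}{\Gamma(2-\alpha)}\sum_{s=0}^{j}c_{j-s}^{(\alpha)}u_{t,s},$$ where the coefficients $c_s^{(\alpha)}$ (which depend on $j$) are: for $j=1$: $c_0^{(\alpha)}=a_0^{(\alpha)}+b_0^{(\alpha)}+b_1^{(\alpha)}$,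 $c_1^{(\alpha)}=a_1^{(\alpha)}-b_1^{(\alpha)}-b_0^{(\alpha)}$; for $j=2$: $c_0^{(\alpha)}=a_0^{(\alpha)}+b_0^{(\alpha)}$, $c_1^{(\alpha)}=a_1^{(\alpha)}+b_1^{(\alpha)}+b_2^{(\alpha)}-b_0^{(\alpha)}$, $c_2^{(\alpha)}=a_2^{(\alpha)}-b_2^{(\alpha)}-b_1^{(\alpha)}$; for $j\ge3$: $c_0^{(\alpha)}=a_0^{(\alpha)}+b_0^{(\alpha)}$, $c_s^{(\alpha)}=a_s^{(\alpha)}+b_s^{(\alpha)}-b_{s-1}^{(\alpha)}$ for $1\le s\le j-2$, $c_{j-1}^{(\alpha)}=a_{j-1}^{(\alpha)}+b_{j-1}^{(\alpha)}+b_j^{(\alpha)}-b_{j-2}^{(\alpha)}$, $c_j^{(\alpha)}=a_j^{(\alpha)}-b_j^{(\alpha)}-b_{j-1}^{(\alpha)}$. *)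

From Stdlib Require Import Reals.
From Coquelicot Require Import Coquelicot.
Open Scope R_scope.

Definition Gamma (s : R) : R :=
  RInt_gen (fun x => Rpower x (s - 1) * exp (- x)) (at_right 0) (Rbar_locally p_infty).

Definition caputo (alpha : R) (u : R -> R) (t : R) : R :=
  RInt_gen (fun eta => Derive u eta * Rpower (t - eta) (- alpha)) (at_point 0) (at_left t)
  / Gamma (1 - alpha).

(* x^p for x >= 0 and p > 0, with the convention 0^p = 0
   (Stdlib's Rpower 0 p = exp (p * ln 0) = 1, which is wrong here). *)
Definition rpow (x p : R) : R := if Rle_dec x 0 then 0 else Rpower x p.

Definition a_coef (alpha : R) (l : nat) : R :=
  rpow (INR l + 1) (1 - alpha) - rpow (INR l) (1 - alpha).

Definition b_coef (alpha : R) (l : nat) : R :=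
  / (2 - alpha) * (rpow (INR l + 1) (2 - alpha) - rpow (INR l) (2 - alpha))
  - / 2 * (rpow (INR l + 1) (1 - alpha) + rpow (INR l) (1 - alpha)).

Definition c_coef (alpha : R) (j s : nat) : R :=
  let a := a_coef alpha in let b := b_coef alpha in
  match j with
  | 0%nat => a 0%nat
  | 1%nat => if Nat.eqb s 0 then a 0%nat + b 0%nat + b 1%nat
             else a 1%nat - b 1%nat - b 0%nat
  | 2%nat => if Nat.eqb s 0 then a 0%nat + b 0%nat
             else if Nat.eqb s 1 then a 1%nat + b 1%nat + b 2%nat - b 0%nat
             else a 2%nat - b 2%nat - b 1%nat
  | _ => if Nat.eqb s 0 then a 0%nat + b 0%nat
         else if Nat.leb s (j - 2) then a s + b s - b (s - 1)%nat
         else if Nat.eqb s (j - 1) then a (j - 1)%nat + b (j - 1)%nat + b j - b (j - 2)%nat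
         else a j - b j - b (j - 1)%nat
  end.

Definition L2_formula (alpha tau : R) (u : R -> R) (j : nat) : R :=
  Rpower tau (1 - alpha) / Gamma (2 - alpha) *
  sum_f_R0 (fun s => c_coef alpha j (j - s)%nat *
                     ((u (INR (s + 1) * tau) - u (INR s * tau)) / tau)) j.

(* On the cell [t_k, t_(k+1)] the L2 formula integrates exactly, against the kernel
   w(x) = (t_(j+1) - x)^(-alpha), the linear function A_k + D_k (x - m_k), where A_k is the
   divided difference of u on the cell, m_k its midpoint and D_k the second divided difference
   over the cell and its left neighbour (its right one for k = 0).  This is the derivative of
   the quadratic interpolant of u at three consecutive nodes, so it is within 5 K tau^2 of u'.
   On the last cell this gives an error 5 K tau^2 * int w = O(tau^(3-alpha)).  On the other
   cells u' - (A_k + D_k (x - m_k)) has mean zero, so w may be replaced by w - w(t_k); the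
   resulting bounds 5 K tau^3 (w(t_(k+1)) - w(t_k)) telescope to 5 K tau^3 tau^(-alpha).
   Summation by parts turns sum_k (a_(j-k) A_k + b_(j-k) tau D_k) into the coefficients c_s of
   the L2 formula, and Gamma(2 - alpha) = (1 - alpha) Gamma(1 - alpha) reconciles the two
   normalisations. *)

From Stdlib Require Import Reals Lra Lia Factorial.
From Coquelicot Require Import Coquelicot.
Open Scope R_scope.

Lemma Rpower_gt0 x p : 0 < Rpower x p.
Proof. apply exp_pos. Qed.

Lemma Rpower_plus1 x p : 0 < x -> Rpower x (p + 1) = x * Rpower x p.
Proof. intros Hx. rewrite Rpower_plus, Rpower_1 by exact Hx. ring. Qed.

Lemma is_derive_Rpower x p : 0 < x ->
  is_derive (fun y => Rpower y p) x (p * Rpower x (p - 1)).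
Proof. intros Hx. now apply is_derive_Reals, derivable_pt_lim_power. Qed.

Lemma ex_derive_Rpower x p : 0 < x -> ex_derive (fun y => Rpower y p) x.
Proof. intros Hx. eexists. now apply is_derive_Rpower. Qed.

Lemma Derive_Rpower x p : 0 < x -> Derive (fun y => Rpower y p) x = p * Rpower x (p - 1).
Proof. intros Hx. now apply is_derive_unique, is_derive_Rpower. Qed.

Lemma continuous_Rpower x p : 0 < x -> continuous (fun y => Rpower y p) x.
Proof.
  intros Hx. apply (@ex_derive_continuous R_AbsRing R_NormedModule). now apply ex_derive_Rpower.
Qed.

Lemma continuous_Rpower_sub t p x : x < t -> continuous (fun y => Rpower (t - y) p) x.
Proof.
  intros Hx. apply (@ex_derive_continuous R_AbsRing R_NormedModule).
  auto_derive. apply ex_derive_Rpower. lra.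
Qed.

Lemma Rpower_sub_le_compat t p x y : p <= 0 -> x <= y < t ->
  Rpower (t - x) p <= Rpower (t - y) p.
Proof.
  intros Hp Hxy.
  replace p with (- - p) by ring. rewrite !(Rpower_Ropp _ (- p)).
  apply Rinv_le_contravar; [apply Rpower_gt0|].
  apply Rle_Rpower_l; lra.
Qed.

Lemma exp_opp_le1 x : 0 <= x -> exp (- x) <= 1.
Proof.
  intros Hx. rewrite <- exp_0.
  destruct (Rle_lt_or_eq_dec 0 x Hx) as [Hlt | <-].
  - apply Rlt_le, exp_increasing. lra.
  - rewrite Ropp_0. apply Rle_refl.
Qed.

Lemma filterlim_Rpower_at_right_0 p : 0 < p ->
  filterlim (fun x => Rpower x p) (at_right 0) (locally 0).
Proof.
  intros Hp.
  apply (filterlim_comp _ _ _ (fun x => p * ln x) exp _ (Rbar_locally m_infty));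
    [|exact is_lim_exp_m].
  apply (filterlim_comp _ _ _ ln (Rmult p) _ (Rbar_locally m_infty)); [exact is_lim_ln_0|].
  replace (Rbar_locally m_infty) with (Rbar_locally (Rbar_mult p m_infty)) at 2;
    [apply filterlim_Rbar_mult_l|].
  simpl. destruct (Rle_dec 0 p); [|lra].
  destruct (Rle_lt_or_eq_dec 0 p r); [reflexivity | lra].
Qed.

Lemma filterlim_sub_at_left t : filterlim (fun x => t - x) (at_left t) (at_right 0).
Proof.
  intros P [e HP]. exists e. intros y Hy Hyt. apply HP; [|lra].
  change (Rabs (y - t) < e) in Hy. change (Rabs (t - y - 0) < e).
  rewrite Rabs_left in Hy by lra. rewrite Rabs_right by lra. lra.
Qed.

Lemma filterlim_Rpower_sub_at_left t p : 0 < p ->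
  filterlim (fun x => Rpower (t - x) p) (at_left t) (locally 0).
Proof.
  intros Hp.
  exact (filterlim_comp _ _ _ _ _ _ _ _ (filterlim_sub_at_left t)
           (filterlim_Rpower_at_right_0 p Hp)).
Qed.

Lemma filterlim_exp_opp_p_infty :
  filterlim (fun x => exp (- x)) (Rbar_locally p_infty) (locally 0).
Proof. exact (filterlim_comp _ _ _ Ropp exp _ _ _ (filterlim_Rbar_opp p_infty) is_lim_exp_m). Qed.

Lemma filterlim_Rmult_l_0 {T} (F : (T -> Prop) -> Prop) {FF : ProperFilter F} (h : T -> R) c :
  filterlim h F (locally 0) -> filterlim (fun x => c * h x) F (locally 0).
Proof.
  intros Hh. rewrite <- (Rmult_0_r c).
  exact (filterlim_comp _ _ _ h (fun y => scal c y) F _ _ Hh (filterlim_scal_r c 0)).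
Qed.

Lemma filterlim_Rplus {T} (F : (T -> Prop) -> Prop) {FF : ProperFilter F} (f g : T -> R) lf lg :
  filterlim f F (locally lf) -> filterlim g F (locally lg) ->
  filterlim (fun x => f x + g x) F (locally (lf + lg)).
Proof.
  intros Hf Hg. exact (filterlim_comp_2 f g Rplus Hf Hg (@filterlim_plus _ R_NormedModule lf lg)).
Qed.

Lemma Rabs_le_of_filterlim {T} (F : (T -> Prop) -> Prop) {FF : ProperFilter F} (I : T -> R) L B :
  filterlim I F (locally L) -> F (fun x => Rabs (I x) <= B) -> Rabs L <= B.
Proof.
  intros HI HB. apply Rabs_le. split.
  - apply (filterlim_le (F := F) (fun _ => - B) I (- B) L); [|apply filterlim_const | exact HI].
    apply (filter_imp _ _ (fun x Hx => proj1 (proj1 (Rabs_le_between _ _) Hx)) HB).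
  - apply (filterlim_le (F := F) I (fun _ => B) L B); [|exact HI | apply filterlim_const].
    apply (filter_imp _ _ (fun x Hx => proj2 (proj1 (Rabs_le_between _ _) Hx)) HB).
Qed.

Lemma ex_filterlim_of_oscillation {T} (F : (T -> Prop) -> Prop) {FF : ProperFilter F}
    (I w : T -> R) (Q : T -> Prop) :
  F Q -> filterlim w F (locally 0) ->
  (forall x y, Q x -> Q y -> Rabs (I x - I y) <= w x + w y) ->
  exists L, filterlim I F (locally L).
Proof.
  intros HQ Hw Hosc.
  assert (Hcauchy : cauchy (filtermap I F)).
  { apply cauchy_distance. intros eps.
    assert (He : 0 < eps / 2) by (pose proof (cond_pos eps); lra).
    pose (Q' x := Q x /\ Rabs (w x - 0) < eps / 2).
    exists (fun v => exists x, Q' x /\ v = I x). split.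
    - unfold filtermap. apply (filter_imp Q'); [intros x Hx; now exists x|].
      apply filter_and; [exact HQ|].
      exact (proj1 (filterlim_locally w 0) Hw (mkposreal _ He)).
    - intros v v' [x [[Hx Hwx] ->]] [y [[Hy Hwy] ->]].
      change (Rabs (I y - I x) < eps).
      rewrite Rminus_0_r in Hwx, Hwy.
      apply Rle_lt_trans with (w y + w x); [now apply Hosc|].
      apply Rabs_lt_between in Hwx. apply Rabs_lt_between in Hwy. lra. }
  exists (lim (filtermap I F)). intros P [eps HP]. unfold filtermap.
  apply (filter_imp (fun x => ball (lim (filtermap I F)) eps (I x))); [intros x; apply HP|].
  exact (complete_cauchy _ _ Hcauchy eps).
Qed.

Lemma at_left_interval a t : a < t -> at_left t (fun b => a <= b < t).
Proof.
  intros Hat. exists (mkposreal (t - a) ltac:(simpl; lra)). intros y Hy Hyt.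
  change (Rabs (y - t) < t - a) in Hy. apply Rabs_lt_between in Hy. lra.
Qed.

Lemma at_right_0_interval b : 0 < b -> at_right 0 (fun a => 0 < a <= b).
Proof.
  intros Hb. exists (mkposreal b Hb). intros y Hy Hy0.
  change (Rabs (y - 0) < b) in Hy. apply Rabs_lt_between in Hy. simpl in Hy. lra.
Qed.

Lemma ex_RInt_continuous_le (f : R -> R) a b : a <= b ->
  (forall x, a <= x <= b -> continuous f x) -> ex_RInt f a b.
Proof.
  intros Hab Hf. apply (@ex_RInt_continuous R_CompleteNormedModule).
  intros x Hx. rewrite Rmin_left, Rmax_right in Hx by exact Hab. now apply Hf.
Qed.

Lemma is_RInt_derive_le (F f : R -> R) a b : a <= b ->
  (forall x, a <= x <= b -> is_derive F x (f x)) ->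
  (forall x, a <= x <= b -> continuous f x) ->
  is_RInt f a b (F b - F a).
Proof.
  intros Hab HF Hf. apply (@is_RInt_derive R_CompleteNormedModule);
    intros x Hx; rewrite Rmin_left, Rmax_right in Hx by exact Hab; auto.
Qed.

Lemma abs_RInt_le_primitive (f g G : R -> R) a b : a <= b ->
  (forall x, a <= x <= b -> continuous f x) ->
  (forall x, a <= x <= b -> is_derive G x (g x)) ->
  (forall x, a <= x <= b -> continuous g x) ->
  (forall x, a <= x <= b -> Rabs (f x) <= g x) ->
  Rabs (RInt f a b) <= G b - G a.
Proof.
  intros Hab Hf HG Hg Hfg.
  apply (norm_RInt_le f g a b _ _ Hab Hfg).
  - apply (@RInt_correct R_CompleteNormedModule). now apply ex_RInt_continuous_le.
  - now apply is_RInt_derive_le.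
Qed.

Lemma RInt_sub_Chasles (f : R -> R) a b c : ex_RInt f a b -> ex_RInt f a c ->
  RInt f a c - RInt f a b = RInt f b c.
Proof.
  intros Hb Hc. rewrite <- (RInt_Chasles f a b c Hb).
  - unfold plus; simpl. ring.
  - exact (ex_RInt_Chasles f b a c (ex_RInt_swap f a b Hb) Hc).
Qed.

Lemma RInt_sum_error (f : R -> R) (x P e : nat -> R) n :
  (forall i, (i <= S n)%nat -> ex_RInt f (x 0%nat) (x i)) ->
  (forall i, (i <= n)%nat -> Rabs (RInt f (x i) (x (S i)) - P i) <= e (S i) - e i) ->
  Rabs (RInt f (x 0%nat) (x (S n)) - sum_f_R0 P n) <= e (S n) - e 0%nat.
Proof.
  intros Hex Herr. induction n as [| n IH].
  - exact (Herr 0%nat (le_n 0)).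
  - specialize (IH (fun i Hi => Hex i ltac:(lia)) (fun i Hi => Herr i ltac:(lia))).
    pose proof (Herr (S n) (le_n _)) as Hlast.
    rewrite <- (RInt_sub_Chasles f (x 0%nat)) in Hlast by (apply Hex; lia).
    rewrite tech5.
    set (I1 := RInt f (x 0%nat) (x (S n))) in *.
    set (I2 := RInt f (x 0%nat) (x (S (S n)))) in *.
    replace (I2 - (sum_f_R0 P n + P (S n)))
      with ((I1 - sum_f_R0 P n) + (I2 - I1 - P (S n))) by ring.
    eapply Rle_trans; [apply Rabs_triang | lra].
Qed.

Lemma RInt_mul_nondecreasing_mean_zero (g k : R -> R) a b E : a <= b ->
  (forall x, a <= x <= b -> continuous g x) ->
  (forall x, a <= x <= b -> continuous k x) ->
  is_RInt g a b 0 ->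
  (forall x, a <= x <= b -> Rabs (g x) <= E) ->
  (forall x y, a <= x <= y -> y <= b -> k x <= k y) ->
  Rabs (RInt (fun x => g x * k x) a b) <= (b - a) * (E * (k b - k a)).
Proof.
  intros Hab Hg Hk Hg0 HE Hmono.
  assert (Hex : ex_RInt (fun x => g x * (k x - k a)) a b).
  { apply ex_RInt_continuous_le; [exact Hab|]. intros x Hx.
    apply (continuous_mult g (fun y => k y - k a)); [now apply Hg|].
    apply (continuous_minus k (fun _ => k a)); [now apply Hk | apply continuous_const]. }
  replace (RInt (fun x => g x * k x) a b) with (RInt (fun x => g x * (k x - k a)) a b).
  - apply abs_RInt_le_const; [exact Hab | exact Hex |]. intros x Hx.
    rewrite Rabs_mult, (Rabs_right (k x - k a)) by (apply Rle_ge; pose proof (Hmono a x); lra).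
    apply Rmult_le_compat; [apply Rabs_pos | pose proof (Hmono a x); lra | now apply HE |].
    pose proof (Hmono x b). lra.
  - symmetry. apply is_RInt_unique.
    apply (@is_RInt_ext R_NormedModule (fun x => g x * (k x - k a) + k a * g x));
      [intros x _; simpl; ring|].
    rewrite <- (Rplus_0_r (RInt _ a b)), <- (Rmult_0_r (k a)).
    apply (@is_RInt_plus R_NormedModule).
    + now apply (@RInt_correct R_CompleteNormedModule).
    + now apply (@is_RInt_scal R_NormedModule).
Qed.

Lemma is_RInt_Derive_sub_secant_linear (u : R -> R) x0 tau A D : 0 < tau ->
  A = (u (x0 + tau) - u x0) / tau ->
  (forall x, x0 <= x <= x0 + tau -> ex_derive u x /\ continuous (Derive u) x) ->
  is_RInt (fun x => Derive u x - (A + D * (x - (x0 + tau / 2)))) x0 (x0 + tau) 0.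
Proof.
  intros Htau HA Hu.
  set (m := x0 + tau / 2).
  replace 0 with ((u (x0 + tau) - (A * (x0 + tau) + D * (x0 + tau - m) ^ 2 / 2))
                  - (u x0 - (A * x0 + D * (x0 - m) ^ 2 / 2)))
    by (unfold m; rewrite HA; field; lra).
  apply (is_RInt_derive_le (fun x => u x - (A * x + D * (x - m) ^ 2 / 2))); [lra | |].
  - intros x Hx. auto_derive; [now apply Hu|].
    change (Derive (fun y => u y) x) with (Derive u x). field.
  - intros x Hx. apply (continuous_minus (Derive u)); [now apply Hu|].
    apply (@ex_derive_continuous R_AbsRing R_NormedModule). auto_derive. exact I.
Qed.

Lemma ex_lim_RInt_dominated (F : (R -> Prop) -> Prop) {FF : ProperFilter F}
    (f G : R -> R) (c l : R) (Q : R -> Prop) :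
  F Q -> (forall x, Q x -> ex_RInt f c x) ->
  (forall x y, Q x -> Q y -> x <= y -> Rabs (RInt f x y) <= G y - G x) ->
  filterlim G F (locally l) ->
  exists L, filterlim (fun b => RInt f c b) F (locally L).
Proof.
  intros HQ Hex Hdom HG.
  apply (ex_filterlim_of_oscillation F _ (fun x => Rabs (G x - l)) Q HQ).
  - apply filterlim_locally. intros eps.
    eapply filter_imp; [|exact (proj1 (filterlim_locally G l) HG eps)]. intros x Hx.
    change (Rabs (Rabs (G x - l) - 0) < eps).
    rewrite Rminus_0_r, Rabs_Rabsolu. exact Hx.
  - assert (Htri : forall a b, G b - G a <= Rabs (G a - l) + Rabs (G b - l)).
    { intros a b. pose proof (Rle_abs (G b - l)). pose proof (Rabs_maj2 (G a - l)). lra. }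
    intros x y Hx Hy. destruct (Rle_dec x y) as [Hxy | Hxy].
    + rewrite Rabs_minus_sym, RInt_sub_Chasles by auto.
      eapply Rle_trans; [apply (Hdom x y Hx Hy Hxy) | apply Htri].
    + rewrite RInt_sub_Chasles by auto.
      eapply Rle_trans; [apply (Hdom y x Hy Hx); lra | rewrite Rplus_comm; apply Htri].
Qed.

Lemma is_RInt_gen_at_point_lim (F : (R -> Prop) -> Prop) {FF : Filter F} (f : R -> R) a l :
  F (fun b => ex_RInt f a b) -> filterlim (fun b => RInt f a b) F (locally l) ->
  is_RInt_gen f (at_point a) F l.
Proof.
  intros Hex Hl P HP.
  apply (Filter_prod (at_point a) F _ (fun y => y = a) (fun b => ex_RInt f a b /\ P (RInt f a b))).
  - reflexivity.
  - apply filter_and; [exact Hex | exact (Hl P HP)].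
  - intros y b -> [Hb HPb]. exists (RInt f a b). split; [|exact HPb].
    exact (@RInt_correct R_CompleteNormedModule f a b Hb).
Qed.

(** * The recurrence of the Gamma function *)

Section Gamma.

Variable s : R.
Hypothesis s_bounds : 0 < s <= 1.

Let g x := Rpower x (s - 1) * exp (- x).

Lemma continuous_Gamma_integrand x : 0 < x -> continuous g x.
Proof.
  intros Hx. apply (continuous_mult (fun y => Rpower y (s - 1)) (fun y => exp (- y))).
  - now apply continuous_Rpower.
  - apply (@ex_derive_continuous R_AbsRing R_NormedModule). auto_derive. exact I.
Qed.

Lemma ex_RInt_Gamma_integrand a b : 0 < a <= b -> ex_RInt g a b.
Proof.
  intros Hab. apply ex_RInt_continuous_le; [lra|].
  intros x Hx. apply continuous_Gamma_integrand. lra.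
Qed.

Lemma is_RInt_gen_Gamma_integrand_0 : exists L, is_RInt_gen g (at_right 0) (at_point 1) L.
Proof.
  assert (Hg : forall x, 0 < x -> Rabs (g x) <= Rpower x (s - 1)).
  { intros x Hx. unfold g. rewrite Rabs_mult, !Rabs_right by (apply Rle_ge, Rlt_le, exp_pos).
    pose proof (Rpower_gt0 x (s - 1)). pose proof (exp_opp_le1 x ltac:(lra)). nra. }
  destruct (ex_lim_RInt_dominated (at_right 0) g (fun x => / s * Rpower x s) 1 0
              (fun x => 0 < x <= 1)) as [L HL].
  - apply at_right_0_interval. lra.
  - intros x Hx. apply ex_RInt_swap, ex_RInt_Gamma_integrand. lra.
  - intros x y Hx Hy Hxy.
    apply (abs_RInt_le_primitive _ (fun z => Rpower z (s - 1)) (fun z => / s * Rpower z s));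
      [exact Hxy | | | |]; intros z Hz.
    + apply continuous_Gamma_integrand. lra.
    + auto_derive; [apply ex_derive_Rpower; lra|].
      rewrite Derive_Rpower by lra. field. lra.
    + apply continuous_Rpower. lra.
    + apply Hg. lra.
  - apply (filterlim_Rmult_l_0 (at_right 0)), filterlim_Rpower_at_right_0. lra.
  - exists (- L).
    apply (is_RInt_gen_swap (V := R_NormedModule) (Fa := at_right 0) (Fb := at_point 1) g L).
    apply (is_RInt_gen_at_point_lim (at_right 0)); [|exact HL].
    eapply filter_imp; [|apply (at_right_0_interval 1); lra].
    intros x Hx. apply ex_RInt_swap, ex_RInt_Gamma_integrand. lra.
Qed.

Lemma is_RInt_gen_Gamma_integrand_p_infty :
  exists L, is_RInt_gen g (at_point 1) (Rbar_locally p_infty) L.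
Proof.
  assert (Hg : forall x, 1 <= x -> Rabs (g x) <= exp (- x)).
  { intros x Hx. unfold g. rewrite Rabs_mult, !Rabs_right by (apply Rle_ge, Rlt_le, exp_pos).
    assert (Rpower x (s - 1) <= 1).
    { rewrite <- (Rpower_O x) at 2 by lra. apply Rle_Rpower; lra. }
    pose proof (exp_pos (- x)). nra. }
  destruct (ex_lim_RInt_dominated (Rbar_locally p_infty) g (fun x => - exp (- x)) 1 0
              (fun x => 1 < x)) as [L HL].
  - exists 1. auto.
  - intros x Hx. apply ex_RInt_Gamma_integrand. lra.
  - intros x y Hx Hy Hxy.
    apply (abs_RInt_le_primitive _ (fun z => exp (- z)) (fun z => - exp (- z)));
      [exact Hxy | | | |]; intros z Hz.
    + apply continuous_Gamma_integrand. lra.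
    + auto_derive; [exact I | ring].
    + apply (@ex_derive_continuous R_AbsRing R_NormedModule). auto_derive. exact I.
    + apply Hg. lra.
  - apply (filterlim_ext (fun x => -1 * exp (- x))); [intros x; ring|].
    apply (filterlim_Rmult_l_0 (Rbar_locally p_infty)), filterlim_exp_opp_p_infty.
  - exists L. apply (is_RInt_gen_at_point_lim (Rbar_locally p_infty)); [|exact HL].
    exists 1. intros x Hx. apply ex_RInt_Gamma_integrand. lra.
Qed.

Lemma is_RInt_gen_Gamma_integrand :
  exists L, is_RInt_gen g (at_right 0) (Rbar_locally p_infty) L.
Proof.
  destruct is_RInt_gen_Gamma_integrand_0 as [L0 H0].
  destruct is_RInt_gen_Gamma_integrand_p_infty as [Linf Hinf].
  exists (plus L0 Linf). exact (is_RInt_gen_Chasles g 1 L0 Linf H0 Hinf).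
Qed.

Lemma filterlim_Gamma_boundary_0 :
  filterlim (fun x => Rpower x s * exp (- x)) (at_right 0) (locally 0).
Proof.
  apply (filterlim_le_le (F := at_right 0) (fun _ => 0) _ (fun x => Rpower x s) 0).
  - exists (mkposreal 1 Rlt_0_1). intros x _ Hx.
    pose proof (Rpower_gt0 x s). pose proof (exp_pos (- x)).
    pose proof (exp_opp_le1 x ltac:(lra)). split; nra.
  - apply filterlim_const.
  - apply filterlim_Rpower_at_right_0. lra.
Qed.

Lemma filterlim_Gamma_boundary_p_infty :
  filterlim (fun x => Rpower x s * exp (- x)) (Rbar_locally p_infty) (locally 0).
Proof.
  apply (filterlim_le_le (F := Rbar_locally p_infty) (fun _ => 0) _
           (fun x => -1 * (- x * exp (- x))) 0).
  - exists 1. intros x Hx.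
    assert (Rpower x s <= x) by (rewrite <- (Rpower_1 x) at 2 by lra; apply Rle_Rpower; lra).
    pose proof (Rpower_gt0 x s). pose proof (exp_pos (- x)). split; nra.
  - apply filterlim_const.
  - apply (filterlim_Rmult_l_0 (Rbar_locally p_infty)).
    exact (filterlim_comp _ _ _ Ropp (fun y => y * exp y) _ _ _
             (filterlim_Rbar_opp p_infty) is_lim_mul_exp_m).
Qed.

Lemma is_RInt_gen_Gamma_by_parts :
  is_RInt_gen (fun x => Rpower x s * exp (- x) - s * g x) (at_right 0) (Rbar_locally p_infty) 0.
Proof.
  set (F x := -1 * (Rpower x s * exp (- x))).
  set (h x := Rpower x s * exp (- x) - s * g x).
  assert (HF : forall x, 0 < x -> is_derive F x (h x)).
  { intros x Hx. unfold F, h, g.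
    auto_derive; [now apply ex_derive_Rpower|].
    rewrite Derive_Rpower by exact Hx. ring. }
  assert (Hpos : filter_prod (at_right 0) (Rbar_locally p_infty)
     (fun ab => forall x, Rmin (fst ab) (snd ab) <= x <= Rmax (fst ab) (snd ab) -> 0 < x)).
  { apply (Filter_prod _ _ _ (fun a => 0 < a) (fun b => 0 < b)).
    - exists (mkposreal 1 Rlt_0_1). auto.
    - exists 0. auto.
    - intros a b Ha Hb x [Hx _]. simpl in Hx.
      pose proof (Rmin_glb_lt a b 0 Ha Hb). lra. }
  rewrite <- (Rminus_0_r 0) at 2.
  apply (is_RInt_gen_ext (Derive F)).
  { eapply filter_imp; [|exact Hpos]. intros [a b] Hab x Hx. simpl in *.
    apply is_derive_unique, HF, Hab. lra. }
  apply is_RInt_gen_Derive.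
  - eapply filter_imp; [|exact Hpos]. intros ab Hab x Hx. eexists. apply HF, Hab, Hx.
  - eapply filter_imp; [|exact Hpos]. intros ab Hab x Hx.
    pose proof (Hab x Hx) as Hx0.
    apply (continuous_ext_loc _ h).
    + exists (mkposreal x Hx0). intros y Hy.
      change (Rabs (y - x) < x) in Hy. apply Rabs_lt_between in Hy.
      symmetry. apply is_derive_unique, HF. lra.
    + apply (@ex_derive_continuous R_AbsRing R_NormedModule). unfold h, g.
      auto_derive; repeat split; now apply ex_derive_Rpower.
  - apply (filterlim_Rmult_l_0 (at_right 0)), filterlim_Gamma_boundary_0.
  - apply (filterlim_Rmult_l_0 (Rbar_locally p_infty)), filterlim_Gamma_boundary_p_infty.
Qed.

Lemma Gamma_succ : Gamma (s + 1) = s * Gamma s.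
Proof.
  destruct is_RInt_gen_Gamma_integrand as [L HL].
  assert (Hsucc : is_RInt_gen (fun x => Rpower x (s + 1 - 1) * exp (- x))
                    (at_right 0) (Rbar_locally p_infty) (plus 0 (scal s L))).
  { eapply is_RInt_gen_ext;
      [|exact (is_RInt_gen_plus _ _ _ _ is_RInt_gen_Gamma_by_parts (is_RInt_gen_scal _ s _ HL))].
    apply filter_forall. intros ab x _. unfold plus, scal; simpl; unfold mult; simpl.
    replace (s + 1 - 1) with s by ring. ring. }
  unfold Gamma. rewrite (is_RInt_gen_unique _ _ Hsucc).
  change (fun x => Rpower x (s - 1) * exp (- x)) with g.
  rewrite (is_RInt_gen_unique _ _ HL).
  unfold plus, scal; simpl; unfold mult; simpl. ring.
Qed.

End Gamma.

(** * Derivative of the quadratic interpolant *)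

Lemma Taylor_remainder_le (f : R -> R) n p y M : p < y ->
  (forall z, p <= z <= y -> forall k, (k <= S n)%nat -> ex_derive_n f k z) ->
  (forall z, p <= z <= y -> Rabs (Derive_n f (S n) z) <= M) ->
  Rabs (f y - sum_f_R0 (fun m => (y - p) ^ m / INR (fact m) * Derive_n f m p) n)
    <= (y - p) ^ S n / INR (fact (S n)) * M.
Proof.
  intros Hpy Hder Hbound.
  destruct (Taylor_Lagrange f n p y Hpy Hder) as [z [Hz ->]].
  assert (Hc : 0 <= (y - p) ^ S n / INR (fact (S n))).
  { apply Rmult_le_pos; [apply pow_le; lra|].
    apply Rlt_le, Rinv_0_lt_compat, lt_0_INR, lt_O_fact. }
  replace (_ + _ - _) with ((y - p) ^ S n / INR (fact (S n)) * Derive_n f (S n) z) by ring.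
  rewrite Rabs_mult, Rabs_right by lra.
  apply Rmult_le_compat_l; [exact Hc | apply Hbound; lra].
Qed.

Section Quadratic_interpolation.

Variables (u : R -> R) (T K : R).
Hypothesis u_C3 : forall x, 0 <= x <= T -> forall k, (k <= 3)%nat -> ex_derive_n u k x.
Hypothesis u3_le : forall x, 0 <= x <= T -> Rabs (Derive_n u 3 x) <= K.

Lemma Taylor2_remainder_le p y : 0 <= p -> p < y -> y <= T ->
  Rabs (u y - u p - (y - p) * Derive u p - (y - p) ^ 2 / 2 * Derive_n u 2 p)
    <= (y - p) ^ 3 / 6 * K.
Proof.
  intros Hp Hpy HyT.
  change (Derive u p) with (Derive_n u 1 p).
  replace (u y - u p - (y - p) * Derive_n u 1 p - (y - p) ^ 2 / 2 * Derive_n u 2 p)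
    with (u y - sum_f_R0 (fun m => (y - p) ^ m / INR (fact m) * Derive_n u m p) 2)
    by (simpl; field).
  replace ((y - p) ^ 3 / 6) with ((y - p) ^ 3 / INR (fact 3)) by (simpl; field).
  apply Taylor_remainder_le; [exact Hpy | |].
  - intros z Hz k Hk. apply u_C3; [lra | lia].
  - intros z Hz. apply u3_le. lra.
Qed.

Lemma Derive_Taylor1_remainder_le p y : 0 <= p -> p < y -> y <= T ->
  Rabs (Derive u y - Derive u p - (y - p) * Derive_n u 2 p) <= (y - p) ^ 2 / 2 * K.
Proof.
  intros Hp Hpy HyT.
  change (Derive_n u 2 p) with (Derive_n (Derive u) 1 p).
  replace (Derive u y - Derive u p - (y - p) * Derive_n (Derive u) 1 p)
    with (Derive u y - sum_f_R0 (fun m => (y - p) ^ m / INR (fact m) * Derive_n (Derive u) m p) 1)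
    by (simpl; field).
  replace ((y - p) ^ 2 / 2) with ((y - p) ^ 2 / INR (fact 2)) by (simpl; field).
  apply Taylor_remainder_le; [exact Hpy | |].
  - intros z Hz k Hk.
    destruct k as [| [| [| k]]]; [exact I | | | lia];
      [apply (u_C3 z ltac:(lra) 2) | apply (u_C3 z ltac:(lra) 3)]; lia.
  - intros z Hz. apply u3_le. lra.
Qed.

Lemma Derive_quadratic_interpolant_error p tau x :
  0 <= p -> 0 < tau -> p + 2 * tau <= T -> p <= x <= p + 2 * tau ->
  Rabs (Derive u x - ((u (p + tau) - u p) / tau
          + (u (p + 2 * tau) - 2 * u (p + tau) + u p) / tau ^ 2 * (x - p - tau / 2)))
    <= 5 * K * tau ^ 2.
Proof.
  intros Hp Htau HT Hx.
  assert (HK : 0 <= K) by (eapply Rle_trans; [apply Rabs_pos | apply (u3_le p); lra]).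
  pose proof (Taylor2_remainder_le p (p + tau) Hp ltac:(lra) ltac:(lra)) as T1.
  pose proof (Taylor2_remainder_le p (p + 2 * tau) Hp ltac:(lra) ltac:(lra)) as T2.
  replace (p + tau - p) with tau in T1 by ring.
  replace (p + 2 * tau - p) with (2 * tau) in T2 by ring.
  set (r1 := u (p + tau) - u p - tau * Derive u p - tau ^ 2 / 2 * Derive_n u 2 p) in T1.
  set (r2 := u (p + 2 * tau) - u p - 2 * tau * Derive u p
             - (2 * tau) ^ 2 / 2 * Derive_n u 2 p) in T2.
  set (r3 := Derive u x - Derive u p - (x - p) * Derive_n u 2 p).
  assert (T3 : Rabs r3 <= 2 * K * tau ^ 2).
  { destruct (Req_dec x p) as [-> | Hxp].
    - unfold r3. replace (_ - _ - _) with 0 by ring. rewrite Rabs_R0. nra.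
    - eapply Rle_trans; [apply Derive_Taylor1_remainder_le; lra|].
      assert ((x - p) ^ 2 <= (2 * tau) ^ 2) by (apply pow_incr; lra). nra. }
  assert (T12 : Rabs (r2 - 2 * r1) <= 5 / 3 * K * tau ^ 3).
  { eapply Rle_trans; [apply Rabs_triang|].
    rewrite Rabs_Ropp, Rabs_mult, (Rabs_right 2) by lra.
    replace ((2 * tau) ^ 3) with (8 * tau ^ 3) in T2 by ring. lra. }
  assert (Hmid : Rabs (x - p - tau / 2) <= 3 / 2 * tau) by (apply Rabs_le; lra).
  apply (Rmult_le_reg_l (tau ^ 2)); [apply pow_lt; lra|].
  rewrite <- (Rabs_right (tau ^ 2)) at 1 by (apply Rle_ge, pow_le; lra).
  rewrite <- Rabs_mult.
  replace (tau ^ 2 * _) with (tau ^ 2 * r3 - tau * r1 - (r2 - 2 * r1) * (x - p - tau / 2))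
    by (unfold r1, r2, r3; field; lra).
  eapply Rle_trans; [apply Rabs_triang|].
  eapply Rle_trans; [apply Rplus_le_compat_r, Rabs_triang|].
  rewrite !Rabs_Ropp, !Rabs_mult, (Rabs_right tau), (Rabs_right (tau ^ 2))
    by (apply Rle_ge; try apply pow_le; lra).
  assert (tau ^ 2 * Rabs r3 <= tau ^ 2 * (2 * K * tau ^ 2))
    by (apply Rmult_le_compat_l; [apply pow_le|]; lra).
  assert (tau * Rabs r1 <= tau * (tau ^ 3 / 6 * K))
    by (apply Rmult_le_compat_l; lra).
  assert (Rabs (r2 - 2 * r1) * Rabs (x - p - tau / 2) <= 5 / 3 * K * tau ^ 3 * (3 / 2 * tau))
    by (apply Rmult_le_compat; auto using Rabs_pos).
  assert (0 <= K * tau ^ 4) by (apply Rmult_le_pos; [|apply pow_le]; lra).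
  lra.
Qed.

End Quadratic_interpolation.

(** * Integrals against the kernel [(t - x)^(-al)] *)

Lemma rpow_pos x p : 0 < x -> rpow x p = Rpower x p.
Proof. intros Hx. unfold rpow. destruct (Rle_dec x 0); [lra | reflexivity]. Qed.

Lemma rpow_0 p : rpow 0 p = 0.
Proof. unfold rpow. destruct (Rle_dec 0 0); [reflexivity | lra]. Qed.

Lemma rpow_mul x y p : 0 < x -> 0 <= y -> rpow (x * y) p = Rpower x p * rpow y p.
Proof.
  intros Hx Hy. destruct (Req_dec y 0) as [-> | Hy0].
  - rewrite Rmult_0_r, rpow_0. ring.
  - rewrite !rpow_pos by nra. symmetry. apply Rpower_mult_distr; lra.
Qed.

Lemma rpow_plus1 x p : 0 <= x -> rpow x (p + 1) = x * rpow x p.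
Proof.
  intros Hx. destruct (Req_dec x 0) as [-> | Hx0].
  - rewrite !rpow_0. ring.
  - rewrite !rpow_pos by lra. apply Rpower_plus1; lra.
Qed.

Lemma filterlim_rpow_sub_at_left t p : 0 < p ->
  filterlim (fun x => rpow (t - x) p) (at_left t) (locally 0).
Proof.
  intros Hp. apply (filterlim_ext_loc (fun x => Rpower (t - x) p)).
  - exists (mkposreal 1 Rlt_0_1). intros x _ Hx. symmetry. apply rpow_pos. lra.
  - now apply filterlim_Rpower_sub_at_left.
Qed.

(* Written with [rpow] rather than [Rpower] so that the value at [x = t] is the limit from
   the left. *)
Definition L2_primitive (al t A D m x : R) : R :=
  - (A + D * (t - m)) * rpow (t - x) (1 - al) / (1 - al)
  + D * rpow (t - x) (2 - al) / (2 - al).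

Lemma L2_primitive_increment al tau t x0 x1 l A D : 0 < al < 1 -> 0 < tau ->
  x1 = x0 + tau -> t = x0 + tau * (INR l + 1) ->
  L2_primitive al t A D (x0 + tau / 2) x1 - L2_primitive al t A D (x0 + tau / 2) x0
  = Rpower tau (1 - al) / (1 - al) * (a_coef al l * A + b_coef al l * (D * tau)).
Proof.
  intros Hal Htau -> ->. unfold L2_primitive, a_coef, b_coef.
  pose proof (pos_INR l).
  replace (x0 + tau * (INR l + 1) - (x0 + tau)) with (tau * INR l) by ring.
  replace (x0 + tau * (INR l + 1) - x0) with (tau * (INR l + 1)) by ring.
  replace (2 - al) with ((1 - al) + 1) by ring.
  rewrite !rpow_mul, !rpow_plus1, (Rpower_plus1 tau) by lra.
  field. lra.
Qed.

Section Kernel.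

Variables (al t : R).
Hypothesis al_bounds : 0 < al < 1.

Lemma is_derive_kernel_primitive x : x < t ->
  is_derive (fun y => - Rpower (t - y) (1 - al) / (1 - al)) x (Rpower (t - x) (- al)).
Proof.
  intros Hx. auto_derive; [apply ex_derive_Rpower; lra|].
  rewrite Derive_Rpower by lra. replace (1 - al - 1) with (- al) by ring.
  replace (t + - x) with (t - x) by ring. field. lra.
Qed.

Lemma is_derive_L2_primitive A D m x : x < t ->
  is_derive (L2_primitive al t A D m) x ((A + D * (x - m)) * Rpower (t - x) (- al)).
Proof.
  intros Hx.
  apply (is_derive_ext_loc (fun y => - (A + D * (t - m)) * Rpower (t - y) (1 - al) / (1 - al)
                                     + D * Rpower (t - y) (2 - al) / (2 - al))).
  - exists (mkposreal (t - x) ltac:(simpl; lra)). intros y Hy.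
    change (Rabs (y - x) < t - x) in Hy. apply Rabs_lt_between in Hy.
    unfold L2_primitive. rewrite !rpow_pos by lra. reflexivity.
  - auto_derive; [repeat split; apply ex_derive_Rpower; lra|].
    rewrite !Derive_Rpower by lra.
    replace (t + - x) with (t - x) by ring.
    replace (1 - al - 1) with (- al) by ring.
    replace (2 - al - 1) with (- al + 1) by ring.
    rewrite Rpower_plus1 by lra. field. lra.
Qed.

Lemma filterlim_L2_primitive A D m :
  filterlim (L2_primitive al t A D m) (at_left t) (locally (L2_primitive al t A D m t)).
Proof.
  replace (L2_primitive al t A D m t) with 0
    by (unfold L2_primitive; rewrite Rminus_diag, !rpow_0; field; lra).
  rewrite <- (Rplus_0_r 0). apply (filterlim_Rplus (at_left t)).
  - apply (filterlim_ext (fun x => (- (A + D * (t - m)) / (1 - al)) * rpow (t - x) (1 - al)));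
      [intros x; field; lra|].
    apply (filterlim_Rmult_l_0 (at_left t)), filterlim_rpow_sub_at_left. lra.
  - apply (filterlim_ext (fun x => (D / (2 - al)) * rpow (t - x) (2 - al)));
      [intros x; field; lra|].
    apply (filterlim_Rmult_l_0 (at_left t)), filterlim_rpow_sub_at_left. lra.
Qed.

Lemma abs_RInt_le_kernel (f : R -> R) a b E : a <= b < t ->
  (forall x, a <= x <= b -> continuous f x) ->
  (forall x, a <= x <= b -> Rabs (f x) <= E * Rpower (t - x) (- al)) ->
  Rabs (RInt f a b) <= E * (Rpower (t - a) (1 - al) - Rpower (t - b) (1 - al)) / (1 - al).
Proof.
  intros Hab Hf HE.
  replace (E * _ / _) with (E * (- Rpower (t - b) (1 - al) / (1 - al))
                            - E * (- Rpower (t - a) (1 - al) / (1 - al))) by (field; lra).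
  apply (abs_RInt_le_primitive f (fun x => E * Rpower (t - x) (- al))
           (fun y => E * (- Rpower (t - y) (1 - al) / (1 - al)))); [lra | exact Hf | | | exact HE].
  - intros x Hx. apply (is_derive_scal (fun y => - Rpower (t - y) (1 - al) / (1 - al))).
    apply is_derive_kernel_primitive. lra.
  - intros x Hx. apply (continuous_scal_r E (fun y => Rpower (t - y) (- al))).
    apply continuous_Rpower_sub. lra.
Qed.

Lemma ex_lim_RInt_kernel_dominated (g : R -> R) a E : a < t ->
  (forall x, a <= x < t -> continuous g x) ->
  (forall x, a <= x < t -> Rabs (g x) <= E * Rpower (t - x) (- al)) ->
  exists L, filterlim (fun b => RInt g a b) (at_left t) (locally L) /\
            Rabs L <= E * Rpower (t - a) (1 - al) / (1 - al).
Proof.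
  intros Hat Hg HE.
  assert (Hbound : forall x y, a <= x <= y -> y < t ->
    Rabs (RInt g x y) <= E * (Rpower (t - x) (1 - al) - Rpower (t - y) (1 - al)) / (1 - al)).
  { intros x y Hxy Hy.
    apply abs_RInt_le_kernel; [lra | |]; intros z Hz; [apply Hg | apply HE]; lra. }
  destruct (ex_lim_RInt_dominated (at_left t) g (fun y => - E * Rpower (t - y) (1 - al) / (1 - al))
              a 0 (fun b => a <= b < t)) as [L HL].
  - now apply at_left_interval.
  - intros b Hb. apply ex_RInt_continuous_le; [lra|]. intros x Hx. apply Hg. lra.
  - intros x y Hx Hy Hxy. eapply Rle_trans; [apply Hbound; lra | right; field; lra].
  - apply (filterlim_ext (fun y => (- E / (1 - al)) * Rpower (t - y) (1 - al)));
      [intros y; field; lra|].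
    apply (filterlim_Rmult_l_0 (at_left t)), filterlim_Rpower_sub_at_left. lra.
  - exists L. split; [exact HL|].
    apply (Rabs_le_of_filterlim (at_left t) _ _ _ HL).
    eapply filter_imp; [|exact (at_left_interval a t Hat)]. intros b Hb.
    eapply Rle_trans; [apply Hbound; lra|].
    assert (HE0 : 0 <= E).
    { pose proof (Rpower_gt0 (t - a) (- al)).
      pose proof (Rle_trans _ _ _ (Rabs_pos _) (HE a ltac:(lra))). nra. }
    pose proof (Rpower_gt0 (t - b) (1 - al)).
    unfold Rdiv. apply Rmult_le_compat_r; [apply Rlt_le, Rinv_0_lt_compat; lra|].
    apply Rmult_le_compat_l; lra.
Qed.

Lemma RInt_kernel_split (u : R -> R) A D m a b : a <= b < t ->
  (forall x, a <= x <= b -> continuous (Derive u) x) ->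
  RInt (fun x => Derive u x * Rpower (t - x) (- al)) a b
  = RInt (fun x => (Derive u x - (A + D * (x - m))) * Rpower (t - x) (- al)) a b
    + (L2_primitive al t A D m b - L2_primitive al t A D m a).
Proof.
  intros Hab Hu.
  assert (Hk : forall x, a <= x <= b -> continuous (fun y => Rpower (t - y) (- al)) x)
    by (intros x Hx; apply continuous_Rpower_sub; lra).
  apply is_RInt_unique.
  apply (is_RInt_ext (fun x => (Derive u x - (A + D * (x - m))) * Rpower (t - x) (- al)
                               + (A + D * (x - m)) * Rpower (t - x) (- al)));
    [intros x _; simpl; ring|].
  apply (@is_RInt_plus R_NormedModule).
  - apply (@RInt_correct R_CompleteNormedModule), ex_RInt_continuous_le; [lra|].
    intros x Hx. apply (continuous_mult (fun y => Derive u y - (A + D * (y - m)))); [|now apply Hk].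
    apply (continuous_minus (Derive u)); [now apply Hu|].
    apply (@ex_derive_continuous R_AbsRing R_NormedModule). auto_derive. exact I.
  - apply is_RInt_derive_le; [lra | |].
    + intros x Hx. apply is_derive_L2_primitive. lra.
    + intros x Hx. apply (continuous_mult (fun y => A + D * (y - m))); [|now apply Hk].
      apply (@ex_derive_continuous R_AbsRing R_NormedModule). auto_derive. exact I.
Qed.

Lemma RInt_kernel_interval_error (u : R -> R) x0 tau A D E : 0 < tau -> x0 + tau < t ->
  A = (u (x0 + tau) - u x0) / tau ->
  (forall x, x0 <= x <= x0 + tau -> ex_derive u x /\ continuous (Derive u) x) ->
  (forall x, x0 <= x <= x0 + tau -> Rabs (Derive u x - (A + D * (x - (x0 + tau / 2)))) <= E) ->
  Rabs (RInt (fun x => Derive u x * Rpower (t - x) (- al)) x0 (x0 + tau)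
        - (L2_primitive al t A D (x0 + tau / 2) (x0 + tau)
           - L2_primitive al t A D (x0 + tau / 2) x0))
    <= tau * (E * (Rpower (t - (x0 + tau)) (- al) - Rpower (t - x0) (- al))).
Proof.
  intros Htau Ht HA Hu HE.
  rewrite (RInt_kernel_split u A D (x0 + tau / 2)) by (try intros; try apply Hu; lra).
  rewrite Rplus_minus_r.
  eapply Rle_trans;
    [apply (RInt_mul_nondecreasing_mean_zero _ (fun x => Rpower (t - x) (- al)) x0 (x0 + tau) E)
    | right; ring]; [lra | | | | exact HE |].
  - intros x Hx. apply (continuous_minus (Derive u)); [now apply Hu|].
    apply (@ex_derive_continuous R_AbsRing R_NormedModule). auto_derive. exact I.
  - intros x Hx. apply continuous_Rpower_sub. lra.
  - now apply is_RInt_Derive_sub_secant_linear.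
  - intros x y Hxy Hy. apply Rpower_sub_le_compat; lra.
Qed.

Lemma RInt_kernel_last_interval_error (u : R -> R) x0 A D m E : x0 < t ->
  (forall x, x0 <= x < t -> continuous (Derive u) x) ->
  (forall x, x0 <= x < t -> Rabs (Derive u x - (A + D * (x - m))) <= E) ->
  exists L,
    filterlim (fun b => RInt (fun x => Derive u x * Rpower (t - x) (- al)) x0 b)
      (at_left t) (locally L) /\
    Rabs (L - (L2_primitive al t A D m t - L2_primitive al t A D m x0))
      <= E * Rpower (t - x0) (1 - al) / (1 - al).
Proof.
  intros Hx0 Hu HE.
  destruct (ex_lim_RInt_kernel_dominated
              (fun x => (Derive u x - (A + D * (x - m))) * Rpower (t - x) (- al)) x0 E Hx0)
    as [L [HL HLb]].
  - intros x Hx. apply (continuous_mult (fun y => Derive u y - (A + D * (y - m)))).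
    + apply (continuous_minus (Derive u)); [now apply Hu|].
      apply (@ex_derive_continuous R_AbsRing R_NormedModule). auto_derive. exact I.
    + apply continuous_Rpower_sub. lra.
  - intros x Hx. rewrite Rabs_mult, (Rabs_right (Rpower _ _)) by apply Rle_ge, Rlt_le, Rpower_gt0.
    apply Rmult_le_compat_r; [apply Rlt_le, Rpower_gt0 | now apply HE].
  - exists (L + (L2_primitive al t A D m t - L2_primitive al t A D m x0)).
    rewrite Rplus_minus_r. split; [|exact HLb].
    apply (filterlim_ext_loc (fun b => RInt (fun x => (Derive u x - (A + D * (x - m)))
                                                      * Rpower (t - x) (- al)) x0 b
                                      + (L2_primitive al t A D m b - L2_primitive al t A D m x0))).
    + eapply filter_imp; [|exact (at_left_interval x0 t Hx0)]. intros b Hb. symmetry.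
      apply RInt_kernel_split; [lra|]. intros x Hx. apply Hu. lra.
    + apply (filterlim_Rplus (at_left t)); [exact HL|].
      apply (filterlim_Rplus (at_left t)); [apply filterlim_L2_primitive | apply filterlim_const].
Qed.

End Kernel.

(** * The coefficients of the L2 formula *)

(* At [k = 0] the forward difference is used: the first cell is interpolated together with
   its right neighbour. *)
Definition back_diff (d : nat -> R) (k : nat) : R :=
  match k with 0%nat => d 1%nat - d 0%nat | S k' => d (S k') - d k' end.

(* At [s = S n] the truncated [n - s] is [0], so that summand vanishes. *)
Lemma sum_back_diff (w d : nat -> R) n :
  sum_f_R0 (fun k => w (S n - k)%nat * back_diff d k) (S n)
  = sum_f_R0 (fun s => (w (S n - s)%nat - w (n - s)%nat) * d s) (S n)
    + w (S n) * (d 1%nat - 2 * d 0%nat) + w 0%nat * d (S n).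
Proof.
  rewrite (sum_eq (fun s => (w (S n - s)%nat - w (n - s)%nat) * d s)
                  (fun s => w (S n - s)%nat * d s - w (n - s)%nat * d s)) by (intros; ring).
  rewrite minus_sum, (decomp_sum _ (S n)), (decomp_sum (fun s => w (S n - s)%nat * d s) (S n)),
    tech5 by lia.
  simpl pred.
  rewrite (sum_eq (fun i => w (S n - S i)%nat * back_diff d (S i))
                  (fun i => w (n - i)%nat * d (S i) - w (n - i)%nat * d i))
    by (intros; simpl; ring).
  rewrite minus_sum. replace (n - S n)%nat with 0%nat by lia. simpl. ring.
Qed.

Lemma sum_split_ends (F : nat -> R) n :
  sum_f_R0 F (S (S (S n)))
  = F 0%nat + F 1%nat + sum_f_R0 (fun i => F (S (S i))) n + F (S (S (S n))).
Proof.
  rewrite tech5, (decomp_sum F (S (S n))), (decomp_sum _ (S n)) by lia. simpl pred. ring.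
Qed.

Ltac resolve_nat_tests := repeat first
  [ rewrite (proj2 (Nat.eqb_eq _ _)) by lia
  | rewrite (proj2 (Nat.eqb_neq _ _)) by lia
  | rewrite (proj2 (Nat.leb_le _ _)) by lia
  | rewrite (proj2 (Nat.leb_gt _ _)) by lia ].

Lemma sum_c_coef al (d : nat -> R) j : (1 <= j)%nat ->
  sum_f_R0 (fun s => c_coef al j (j - s) * d s) j
  = sum_f_R0 (fun k => a_coef al (j - k) * d k + b_coef al (j - k) * back_diff d k) j.
Proof.
  intros Hj. rewrite plus_sum.
  destruct j as [| [| [| n]]]; [lia | simpl; ring | simpl; ring |].
  rewrite sum_back_diff, <- !Rplus_assoc, <- plus_sum, !sum_split_ends.
  rewrite Nat.sub_diag, Nat.sub_0_r.
  rewrite (sum_eq (fun i => c_coef al (S (S (S n))) (S (S (S n)) - S (S i)) * d (S (S i)))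
    (fun i => a_coef al (S (S (S n)) - S (S i)) * d (S (S i))
              + (b_coef al (S (S (S n)) - S (S i)) - b_coef al (S (S n) - S (S i))) * d (S (S i)))).
  2: { intros i Hi. change (S (S (S n)) - S (S i))%nat with (S n - i)%nat.
       change (S (S n) - S (S i))%nat with (n - i)%nat.
       cbn -[Nat.sub a_coef b_coef]. resolve_nat_tests.
       replace (S n - i - 1)%nat with (n - i)%nat by lia. ring. }
  unfold c_coef. cbn [Nat.sub]. resolve_nat_tests.
  replace (n - S n)%nat with 0%nat by lia. ring.
Qed.

(** * Error of the L2 formula *)

Definition divided_diff (u : R -> R) (tau : R) (s : nat) : R :=
  (u (INR (s + 1) * tau) - u (INR s * tau)) / tau.

Section L2_error.

Variables (al T K tau : R) (u : R -> R).
Hypothesis al_bounds : 0 < al < 1.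
Hypothesis tau_gt0 : 0 < tau.
Hypothesis two_tau_le : 2 * tau <= T.
Hypothesis u_C3 : forall x, 0 <= x <= T -> forall k, (k <= 3)%nat -> ex_derive_n u k x.
Hypothesis u3_le : forall x, 0 <= x <= T -> Rabs (Derive_n u 3 x) <= K.

Let delta := divided_diff u tau.

Lemma Derive_u_continuous x : 0 <= x <= T -> ex_derive u x /\ continuous (Derive u) x.
Proof.
  intros Hx. split; [exact (u_C3 x Hx 1%nat ltac:(lia))|].
  apply (@ex_derive_continuous R_AbsRing R_NormedModule). exact (u_C3 x Hx 2%nat ltac:(lia)).
Qed.

Lemma grid_S k : INR (S k) * tau = INR k * tau + tau.
Proof. rewrite S_INR. ring. Qed.

Lemma Derive_u_grid_linear_error k x : INR (k + 1) * tau <= T ->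
  INR k * tau <= x <= INR k * tau + tau ->
  Rabs (Derive u x - (delta k + back_diff delta k / tau * (x - (INR k * tau + tau / 2))))
    <= 5 * K * tau ^ 2.
Proof.
  intros HkT Hx. unfold delta, divided_diff.
  destruct k as [| m]; cbn [back_diff]; rewrite !Nat.add_1_r, !grid_S in *.
  - set (p := INR 0 * tau) in *.
    assert (Hp : p = 0) by (unfold p; simpl; ring).
    replace (p + tau + tau) with (p + 2 * tau) by ring.
    eapply Rle_trans;
      [right | apply (Derive_quadratic_interpolant_error u T K u_C3 u3_le p tau x); lra].
    f_equal. field. lra.
  - set (p := INR m * tau) in *.
    assert (Hp : 0 <= p) by (apply Rmult_le_pos; [apply pos_INR | lra]).
    replace (p + tau + tau) with (p + 2 * tau) in * by ring.
    eapply Rle_trans;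
      [right | apply (Derive_quadratic_interpolant_error u T K u_C3 u3_le p tau x); lra].
    f_equal. field. lra.
Qed.

Let integrand j x := Derive u x * Rpower (INR (j + 1) * tau - x) (- al).

Let L2_term j k :=
  Rpower tau (1 - al) / (1 - al)
  * (a_coef al (j - k) * delta k + b_coef al (j - k) * back_diff delta k).

Let interior_bound j i := tau * (5 * K * tau ^ 2 * Rpower (INR (j + 1) * tau - INR i * tau) (- al)).

Lemma continuous_integrand j x : 0 <= x <= T -> x < INR (j + 1) * tau -> continuous (integrand j) x.
Proof.
  intros Hx Hxt. apply (continuous_mult (Derive u)); [now apply Derive_u_continuous|].
  now apply continuous_Rpower_sub.
Qed.

Lemma grid_interval_error j k : (k < j)%nat -> INR (j + 1) * tau <= T ->
  Rabs (RInt (integrand j) (INR k * tau) (INR (S k) * tau) - L2_term j k)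
    <= interior_bound j (S k) - interior_bound j k.
Proof.
  intros Hkj HjT.
  assert (Hk0 : 0 <= INR k * tau) by (apply Rmult_le_pos; [apply pos_INR | lra]).
  assert (Hkj' : INR (S k) * tau <= INR j * tau)
    by (apply Rmult_le_compat_r; [lra | apply le_INR; lia]).
  assert (Ht : INR (j + 1) * tau = INR k * tau + tau * (INR (j - k) + 1))
    by (rewrite minus_INR, plus_INR by lia; simpl; ring).
  assert (Hjt : INR (j + 1) * tau = INR j * tau + tau) by (rewrite plus_INR; simpl; ring).
  unfold integrand, interior_bound. rewrite grid_S in *.
  set (t := INR (j + 1) * tau) in *.
  set (A := delta k). set (D := back_diff delta k / tau).
  replace (L2_term j k) with (L2_primitive al t A D (INR k * tau + tau / 2) (INR k * tau + tau)
                              - L2_primitive al t A D (INR k * tau + tau / 2) (INR k * tau)).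
  2: { rewrite (L2_primitive_increment al tau t _ _ (j - k)) by (auto; lra).
       unfold L2_term, A, D. field. lra. }
  eapply Rle_trans;
    [apply (RInt_kernel_interval_error al t al_bounds u (INR k * tau) tau A D (5 * K * tau ^ 2))
    | right; ring].
  - exact tau_gt0.
  - lra.
  - unfold A, delta, divided_diff. rewrite Nat.add_1_r, grid_S. reflexivity.
  - intros x Hx. apply Derive_u_continuous. lra.
  - intros x Hx. apply Derive_u_grid_linear_error; [rewrite Nat.add_1_r, grid_S|]; lra.
Qed.

Lemma grid_last_interval_error j : INR (j + 1) * tau <= T ->
  exists L,
    filterlim (fun b => RInt (integrand j) (INR j * tau) b) (at_left (INR (j + 1) * tau))
      (locally L) /\
    Rabs (L - L2_term j j) <= 5 * K * tau ^ 2 * Rpower tau (1 - al) / (1 - al).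
Proof.
  intros HjT.
  assert (Hj0 : 0 <= INR j * tau) by (apply Rmult_le_pos; [apply pos_INR | lra]).
  assert (Hjt : INR (j + 1) * tau = INR j * tau + tau) by (rewrite plus_INR; simpl; ring).
  unfold integrand. set (t := INR (j + 1) * tau) in *.
  set (A := delta j). set (D := back_diff delta j / tau).
  destruct (RInt_kernel_last_interval_error al t al_bounds u (INR j * tau) A D
              (INR j * tau + tau / 2) (5 * K * tau ^ 2)) as [L [HL HLb]].
  - lra.
  - intros x Hx. apply Derive_u_continuous. lra.
  - intros x Hx. apply Derive_u_grid_linear_error; [exact HjT | lra].
  - exists L. split; [exact HL|].
    rewrite (L2_primitive_increment al tau t _ _ (j - j)) in HLb
      by (rewrite ?Nat.sub_diag; simpl; lra).
    replace (t - INR j * tau) with tau in HLb by lra.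
    replace (L2_term j j) with (Rpower tau (1 - al) / (1 - al)
                                * (a_coef al (j - j) * A + b_coef al (j - j) * (D * tau))).
    + exact HLb.
    + unfold L2_term, A, D. field. lra.
Qed.

Lemma sum_L2_term j : (1 <= j)%nat ->
  Rpower tau (1 - al) / (1 - al) * sum_f_R0 (fun s => c_coef al j (j - s) * delta s) j
  = sum_f_R0 (L2_term j) (j - 1) + L2_term j j.
Proof.
  intros Hj.
  replace (L2_term j j) with (L2_term j (S (j - 1))) by (f_equal; lia).
  rewrite <- tech5. replace (S (j - 1)) with j by lia.
  rewrite sum_c_coef, scal_sum by exact Hj. apply sum_eq. intros k _. unfold L2_term. ring.
Qed.

Lemma L2_error_budget j :
  interior_bound j j - interior_bound j 0 + 5 * K * tau ^ 2 * Rpower tau (1 - al) / (1 - al)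
  <= 5 * K * (1 + / (1 - al)) * Rpower tau (3 - al).
Proof.
  assert (HK : 0 <= K) by (eapply Rle_trans; [apply Rabs_pos | apply (u3_le 0); lra]).
  assert (H0 : 0 <= interior_bound j 0).
  { unfold interior_bound. apply Rmult_le_pos; [lra|].
    apply Rmult_le_pos; [|apply Rlt_le, Rpower_gt0].
    apply Rmult_le_pos; [lra | apply pow_le; lra]. }
  assert (H3 : Rpower tau (3 - al) = tau ^ 3 * Rpower tau (- al))
    by (replace (3 - al) with (- al + 1 + 1 + 1) by ring; rewrite !Rpower_plus1 by lra; ring).
  assert (H3' : Rpower tau (3 - al) = tau ^ 2 * Rpower tau (1 - al))
    by (replace (3 - al) with (1 - al + 1 + 1) by ring; rewrite !Rpower_plus1 by lra; ring).
  replace (5 * K * (1 + / (1 - al)) * Rpower tau (3 - al))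
    with (5 * K * Rpower tau (3 - al) + 5 * K * Rpower tau (3 - al) / (1 - al)) by (field; lra).
  rewrite H3 at 1. rewrite H3'.
  unfold interior_bound at 1.
  replace (INR (j + 1) * tau - INR j * tau) with tau by (rewrite plus_INR; simpl; ring).
  lra.
Qed.

Lemma caputo_integral_L2_error j : (1 <= j)%nat -> INR (j + 1) * tau <= T ->
  exists I,
    is_RInt_gen (fun x => Derive u x * Rpower (INR (j + 1) * tau - x) (- al))
      (at_point 0) (at_left (INR (j + 1) * tau)) I /\
    Rabs (I - Rpower tau (1 - al) / (1 - al) * sum_f_R0 (fun s => c_coef al j (j - s) * delta s) j)
      <= 5 * K * (1 + / (1 - al)) * Rpower tau (3 - al).
Proof.
  intros Hj HjT.
  assert (Hjt : INR (j + 1) * tau = INR j * tau + tau) by (rewrite plus_INR; simpl; ring).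
  assert (Hgrid : forall i, (i <= j)%nat -> 0 <= INR i * tau <= INR j * tau).
  { intros i Hi. split; [apply Rmult_le_pos; [apply pos_INR | lra]|].
    apply Rmult_le_compat_r; [lra | apply le_INR; lia]. }
  assert (Hex : forall a b, 0 <= a <= b -> b < INR (j + 1) * tau -> ex_RInt (integrand j) a b).
  { intros a b Hab Hb. apply ex_RInt_continuous_le; [lra|].
    intros x Hx. apply continuous_integrand; lra. }
  destruct (grid_last_interval_error j HjT) as [L [HL HLb]].
  pose proof (RInt_sum_error (integrand j) (fun i => INR i * tau) (L2_term j) (interior_bound j)
                (j - 1)) as Hproper.
  replace (S (j - 1)) with j in Hproper by lia. simpl (INR 0 * tau) in Hproper.
  rewrite Rmult_0_l in Hproper.
  specialize (Hproper ltac:(intros i Hi; pose proof (Hgrid i Hi); apply Hex; lra)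
                       ltac:(intros i Hi; apply grid_interval_error; [lia | exact HjT])).
  exists (RInt (integrand j) 0 (INR j * tau) + L). split.
  - pose proof (Hgrid j (le_n j)).
    apply (is_RInt_gen_Chasles (integrand j) (INR j * tau)).
    + apply is_RInt_gen_at_point, (@RInt_correct R_CompleteNormedModule), Hex; lra.
    + apply (is_RInt_gen_at_point_lim (at_left _)); [|exact HL].
      eapply filter_imp; [|exact (at_left_interval (INR j * tau) (INR (j + 1) * tau) ltac:(lra))].
      intros b Hb. apply Hex; lra.
  - rewrite sum_L2_term by exact Hj.
    replace (RInt (integrand j) 0 (INR j * tau) + L
             - (sum_f_R0 (L2_term j) (j - 1) + L2_term j j))
      with ((RInt (integrand j) 0 (INR j * tau) - sum_f_R0 (L2_term j) (j - 1))
            + (L - L2_term j j)) by ring.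
    eapply Rle_trans; [apply Rabs_triang|].
    eapply Rle_trans; [|apply (L2_error_budget j)]. lra.
Qed.

End L2_error.

Theorem lemma1 :
  forall (alpha : R), 0 < alpha < 1 ->
  forall (K : R), 0 <= K ->
  exists C : R,
  forall (T : R) (M : nat) (u : R -> R),
    0 < T -> (2 <= M)%nat ->
    (* u in C^3[0,T] *)
    (forall x, 0 <= x <= T -> forall k, (k <= 3)%nat -> ex_derive_n u k x) ->
    (forall x, 0 <= x <= T -> continuous (Derive_n u 3) x) ->
    (* K bounds max_[0,T] |u'''| *)
    (forall x, 0 <= x <= T -> Rabs (Derive_n u 3 x) <= K) ->
    forall j : nat, (1 <= j <= M - 1)%nat ->
      let tau := T / INR M in
      Rabs (caputo alpha u (INR (j + 1) * tau) - L2_formula alpha tau u j)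
        <= C * Rpower tau (3 - alpha).
Proof.
  intros al Hal K _.
  exists (5 * K * (1 + / (1 - al)) * Rabs (/ Gamma (1 - al))).
  intros T M u HT HM Hder _ Hbound j Hj tau.
  assert (HM2 : 2 <= INR M) by (apply (le_INR 2); lia).
  assert (Htau : 0 < tau) by (apply Rdiv_lt_0_compat; lra).
  assert (HMtau : INR M * tau = T) by (unfold tau; field; lra).
  assert (H2tau : 2 * tau <= T) by (rewrite <- HMtau; apply Rmult_le_compat_r; lra).
  assert (HjT : INR (j + 1) * tau <= T)
    by (rewrite <- HMtau; apply Rmult_le_compat_r; [lra | apply le_INR; lia]).
  destruct (caputo_integral_L2_error al T K tau u Hal Htau H2tau Hder Hbound j ltac:(lia) HjT)
    as [I [HI Herr]].
  unfold caputo, L2_formula. rewrite (is_RInt_gen_unique _ _ HI).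
  replace (2 - al) with ((1 - al) + 1) by ring. rewrite Gamma_succ by lra.
  set (S := sum_f_R0 _ j).
  replace (I / Gamma (1 - al) - Rpower tau (1 - al) / ((1 - al) * Gamma (1 - al)) * S)
    with ((I - Rpower tau (1 - al) / (1 - al) * S) * / Gamma (1 - al))
    by (unfold Rdiv; rewrite Rinv_mult; ring).
  rewrite Rabs_mult.
  eapply Rle_trans; [apply Rmult_le_compat_r; [apply Rabs_pos | exact Herr] | right; ring].
Qed.
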